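(* There is an absolute constant $C$ such that for every odd positive integer $d$ and every $\tau\in[0,d^{1/6}]$ (possibly depending on $d$), $$\int_0^\tau\frac{|H_d(t)|}{t}\,dt\le C\,d^{1/4}\,\tau\,e^{\tau^2/4}.$$
   Context: The Hermite polynomials $(H_k)_{k\ge0}$ are the orthonormal polynomials for $\mathcal{N}(0,1)$ with $\deg H_k=k$ and positive leading coefficient (the probabilist's Hermite polynomials divided by $\sqrt{k!}$). *)

From HB Require Import structures.
From mathcomp Require Import all_boot all_order all_algebra.
From mathcomp Require Import all_classical all_reals all_analysis.
Set Implicit Arguments. Unset Strict Implicit. Unset Printing Implicit Defensive.
Import Order.TTheory GRing.Theory Num.Theory.
Local Open Scope ring_scope.

Section Hermite.
Variable R : realType.

(* herm_pair k = (He_k, He_{k+1}) where He_k are the probabilist's Hermite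
   polynomials: He_0 = 1, He_1 = X, He_{k+2} = X He_{k+1} - (k+1) He_k. *)
Fixpoint herm_pair (k : nat) : {poly R} * {poly R} :=
  match k with
  | 0 => (1, 'X)
  | k'.+1 => let: (p, q) := herm_pair k' in (q, 'X * q - k'.+1%:R *: p)
  end.

Definition probHermite (k : nat) : {poly R} := (herm_pair k).1.

(* normalized Hermite polynomial H_k = He_k / sqrt(k!) (orthonormal for N(0,1)) *)
Definition hermite (k : nat) (t : R) : R :=
  (probHermite k).[t] / Num.sqrt (k`!)%:R.
End Hermite.

(* For odd d, y = He_d solves y'' = x y' - d y with y(0) = 0.  Put
   w = y' - x y / 2, so that (e^{-x^2/4} y)' = e^{-x^2/4} w.  The energy
   e^{-x^2/2} (w^2 + (d + 1/2 - x^2/4) y^2) has derivative -(x/2) e^{-x^2/2} y^2,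
   hence stays below its value y'(0)^2 on [0, +oo).  While x^2 <= 4d + 2 this
   bounds |(e^{-x^2/4} y)'| by |y'(0)|, so |He_d(x)| <= |He_d'(0)| x e^{x^2/4}.
   Finally He_d'(0) = d He_{d-1}(0) = +-d (d-2)!!, whose fourth power is at most
   d (d!)^2; as tau <= d^{1/6} forces tau^2 <= d, integrating the resulting
   bound |H_d(t)| / t <= d^{1/4} e^{tau^2/4} over [0, tau] gives C = 1. *)

From HB Require Import structures.
From mathcomp Require Import all_boot all_order all_algebra.
From mathcomp Require Import all_classical all_reals all_analysis.
From mathcomp Require Import ring lra.
Import Order.TTheory GRing.Theory Num.Theory.
Import numFieldNormedType.Exports.
Local Open Scope ring_scope.

Lemma powR_inv_natK (R : realType) (a : R) k : 0 <= a -> (0 < k)%N ->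
  (a `^ k%:R^-1) ^+ k = a.
Proof.
move=> a_ge0 k_gt0.
by rewrite -powR_mulrn ?powR_ge0 // -powRrM mulVf ?pnatr_eq0 -?lt0n // powRr1.
Qed.

Lemma sqr_le_of_le_powR6 (R : realType) (D x : R) :
  1 <= D -> 0 <= x -> x <= D `^ 6%:R^-1 -> x ^+ 2 <= D.
Proof.
move=> D_ge1 x_ge0 x_le.
have x6_le : x ^+ 6 <= D.
  rewrite -[leRHS](@powR_inv_natK _ D 6) ?(le_trans ler01) //.
  by rewrite lerXn2r ?nnegrE ?powR_ge0.
have [x_le1|x_gt1] := leP x 1.
  by apply: le_trans D_ge1; rewrite exprn_ile1.
apply: le_trans x6_le; rewrite (_ : 6 = 2 + 4)%N // exprD ler_peMr ?exprn_ge0 //.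
by rewrite exprn_ege1 // ltW.
Qed.

Section ProbHermite.
Variable R : realType.
Local Notation He := (@probHermite R).

Lemma herm_pairE k : herm_pair R k = (He k, He k.+1).
Proof. by rewrite /probHermite; elim: k => [//|k IH] /=; rewrite IH. Qed.

Lemma probHermite0 : He 0 = 1. Proof. by []. Qed.

Lemma probHermite1 : He 1 = 'X. Proof. by []. Qed.

Lemma probHermiteSS k : He k.+2 = 'X * He k.+1 - k.+1%:R *: He k.
Proof. by rewrite {1}/probHermite /= herm_pairE. Qed.

Lemma deriv_probHermiteS k : (He k.+1)^`() = k.+1%:R *: He k.
Proof.
suff [] : (He k)^`() = 'X * He k - He k.+1 /\ (He k.+1)^`() = k.+1%:R *: He k
  by [].
elim: k => [|k [IH1 IH2]].
  by rewrite probHermite0 probHermite1 derivC derivX mulr1 subrr scale1r.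
split; first by rewrite IH2 probHermiteSS opprB addrC subrK.
rewrite probHermiteSS derivB derivZ derivM derivX mul1r IH2 IH1.
rewrite -!mul_polyC !polyC_natr; ring.
Qed.

Lemma probHermite_ODE k : (He k)^`()^`() = 'X * (He k)^`() - k%:R *: He k.
Proof.
case: k => [|[|k]].
- by rewrite probHermite0 derivC deriv0 mulr0 scale0r subr0.
- by rewrite probHermite1 derivX derivC mulr1 scale1r subrr.
rewrite !deriv_probHermiteS derivZ deriv_probHermiteS probHermiteSS.
rewrite -!mul_polyC !polyC_natr; ring.
Qed.

Lemma horner_probHermiteSS0 k : (He k.+2).[0] = - k.+1%:R * (He k).[0].
Proof. by rewrite probHermiteSS !hornerE; ring. Qed.

Lemma horner_probHermite_odd0 d : odd d -> (He d).[0] = 0.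
Proof.
move=> d_odd; rewrite -(odd_double_half d) d_odd add1n.
elim: d./2 => [|m IH]; first by rewrite probHermite1 hornerX.
by rewrite doubleS horner_probHermiteSS0 IH mulr0.
Qed.

Lemma horner_probHermite_even0_bound m :
  (He m.*2).[0] ^+ 4 * (m.*2.+1)%:R <= (m.*2)`!%:R ^+ 2.
Proof.
elim: m => [|m IH]; first by rewrite /= probHermite0 hornerC !expr1n mul1r.
rewrite doubleS horner_probHermiteSS0 !factS !natrM.
set a := (He m.*2).[0] in IH *; set F := (m.*2)`!%:R in IH *.
set x := (m.*2.+1)%:R : R.
have -> : (m.*2.+3)%:R = x + 2 :> R by rewrite /x -addn2 natrD.
have -> : (m.*2.+2)%:R = x + 1 :> R by rewrite /x -addn1 natrD.
have x_ge0 : 0 <= x by [].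
have -> : (- x * a) ^+ 4 * (x + 2) = x ^+ 3 * (x + 2) * (a ^+ 4 * x) by ring.
have -> : ((x + 1) * (x * F)) ^+ 2 = x ^+ 2 * (x + 1) ^+ 2 * F ^+ 2 by ring.
have a4_ge0 : 0 <= a ^+ 4 by rewrite (_ : 4 = 2 * 2)%N // exprM sqr_ge0.
apply: ler_pM; last exact: IH.
- by rewrite mulr_ge0 ?exprn_ge0 ?addr_ge0.
- by rewrite mulr_ge0.
- have -> : x ^+ 2 * (x + 1) ^+ 2 = x ^+ 3 * (x + 2) + x ^+ 2 by ring.
  by rewrite lerDl sqr_ge0.
Qed.

Lemma deriv_probHermite_odd0_bound d : odd d ->
  `|(He d)^`().[0]| <= d%:R `^ 4%:R^-1 * Num.sqrt d`!%:R.
Proof.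
move=> d_odd; set m := d./2.
have dm : d = m.*2.+1 by rewrite -[in LHS](odd_double_half d) d_odd.
set D := d%:R : R; set a := (He m.*2).[0]; set F : R := (m.*2)`!%:R.
have D_gt0 : 0 < D by rewrite ltr0n dm.
have bound : a ^+ 4 * D <= F ^+ 2.
  by rewrite /D dm; exact: horner_probHermite_even0_bound.
have deriv0 : (He d)^`().[0] = D * a by rewrite dm deriv_probHermiteS hornerZ /D dm.
have dF : d`!%:R = D * F :> R by rewrite /D dm factS natrM.
rewrite -(ler_pXn2r (n := 4)) ?nnegrE ?mulr_ge0 ?powR_ge0 ?sqrtr_ge0 //.
rewrite exprMn powR_inv_natK ?(ltW D_gt0) // (_ : 4 = 2 * 2)%N // !exprM.
rewrite real_normK ?num_real // sqr_sqrtr ?ler0n // deriv0 dF -exprM.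
have -> : (D * a) ^+ (2 * 2) = D ^+ 3 * (a ^+ 4 * D) by ring.
have -> : D * (D * F) ^+ 2 = D ^+ 3 * F ^+ 2 by ring.
by rewrite ler_wpM2l // exprn_ge0 // ltW.
Qed.

End ProbHermite.

Section DampedEnergy.
Variable R : realType.
Variables (p : {poly R}) (n : R).
Hypothesis p_ODE : p^`()^`() = 'X * p^`() - n *: p.
Hypothesis p0 : p.[0] = 0.

Let w : {poly R} := p^`() - 2^-1 *: ('X * p).
Let L : {poly R} := (n + 2^-1)%:P - 4^-1 *: 'X^2.
Let gauss2 : {poly R} := - (2^-1 *: 'X^2).
Let gauss4 : {poly R} := - (4^-1 *: 'X^2).
Let energy : R -> R :=
  (expR \o horner gauss2) * ((horner w) ^+ 2 + horner L * (horner p) ^+ 2).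
Let damped : R -> R := (expR \o horner gauss4) * horner p.

Lemma is_derive_energy (x : R) :
  is_derive x (1 : R) energy (- (x / 2) * expR gauss2.[x] * p.[x] ^+ 2).
Proof.
apply: is_derive_eq; rewrite /GRing.scale /= /w /L /gauss2.
rewrite !(derivB, derivD, derivZ, derivM, derivX, derivC, derivN, derivXn) p_ODE.
rewrite !fctE !(hornerD, hornerN, hornerZ, hornerM, hornerX, hornerC, hornerXn) /=.
by field.
Qed.

Lemma is_derive_damped (x : R) :
  is_derive x (1 : R) damped (expR gauss4.[x] * w.[x]).
Proof.
apply: is_derive_eq; rewrite /GRing.scale /= /w /gauss4.
rewrite !(derivB, derivD, derivZ, derivM, derivX, derivC, derivN, derivXn).
rewrite ?fctE !(hornerD, hornerN, hornerZ, hornerM, hornerX, hornerC, hornerXn) /=.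
by field.
Qed.

Lemma energy_le c : 0 <= c -> energy c <= p^`().[0] ^+ 2.
Proof.
move=> c_ge0; have -> : p^`().[0] ^+ 2 = energy 0.
  rewrite /energy /w /gauss2 !fctE.
  rewrite !(hornerD, hornerN, hornerZ, hornerM, hornerX, hornerC, hornerXn) p0.
  by rewrite !(mulr0, mul0r, oppr0, expR0, subr0, mul1r, addr0, expr0n).
have dE x : derivable energy x 1 by case: (is_derive_energy x).
apply: (@ler0_derive1_le_cc _ energy 0 c).
- by move=> x _; exact: dE.
- move=> x; rewrite in_itv /= => /andP[x_gt0 _]; have := is_derive_energy x.
  move=> ?; rewrite derive1E derive_val !mulNr oppr_le0.
  by rewrite mulr_ge0 ?sqr_ge0 // mulr_ge0 ?expR_ge0 // divr_ge0 // ltW.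
- exact: derivable_within_continuous (fun x _ => dE x).
- by rewrite in_itv /= lexx c_ge0.
- by rewrite in_itv /= lexx c_ge0.
- exact: c_ge0.
Qed.

Lemma sqr_damped_le x : 0 <= x -> x ^+ 2 <= 4 * (n + 2^-1) ->
  damped x ^+ 2 <= p^`().[0] ^+ 2 * x ^+ 2.
Proof.
have damped0 : damped 0 = 0 by rewrite /damped !fctE p0 mulr0.
rewrite le_eqVlt => /predU1P[<-|x_gt0] x_small.
  by rewrite damped0 !expr0n /= mulr0.
have dD y : derivable damped y 1 by case: (is_derive_damped y).
have [xi] := MVT x_gt0 (fun y _ => is_derive_damped y)
  (derivable_within_continuous (fun y _ => dD y)).
rewrite in_itv /= damped0 !subr0 => /andP[xi_gt0 xi_lt] ->.
rewrite exprMn ler_wpM2r ?sqr_ge0 //.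
have -> : (expR gauss4.[xi] * w.[xi]) ^+ 2 = expR gauss2.[xi] * w.[xi] ^+ 2.
  rewrite exprMn -expRM_natl /gauss4 /gauss2 !(hornerN, hornerZ, hornerXn).
  by congr (expR _ * _); field.
apply: (le_trans _ (energy_le xi (ltW xi_gt0))); rewrite /energy !fctE.
rewrite ler_wpM2l ?expR_ge0 // lerDl mulr_ge0 ?sqr_ge0 //.
rewrite /L !(hornerD, hornerN, hornerZ, hornerXn, hornerC) subr_ge0.
have : xi ^+ 2 <= x ^+ 2 by rewrite lerXn2r ?nnegrE ?ltW.
lra.
Qed.

Lemma damped_horner_le x : 0 <= x -> x ^+ 2 <= 4 * (n + 2^-1) ->
  `|p.[x]| * expR (- (x ^+ 2 / 4)) <= `|p^`().[0]| * x.
Proof.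
move=> x_ge0 x_small; have := sqr_damped_le x x_ge0 x_small.
have -> : damped x = expR (- (x ^+ 2 / 4)) * p.[x].
  rewrite /damped /gauss4 !fctE !(hornerN, hornerZ, hornerXn).
  by congr (expR _ * _); field.
move=> h; rewrite -(ler_pXn2r (n := 2)) ?nnegrE ?mulr_ge0 ?normr_ge0 ?expR_ge0 //.
by rewrite !exprMn !real_normK ?num_real // mulrC -exprMn.
Qed.

End DampedEnergy.

Section HermiteIntegral.
Variable R : realType.
Local Open Scope classical_set_scope.

Lemma inv_measurable : measurable_fun [set: R] GRing.inv.
Proof.
rewrite -(setvU [set 0]); apply/measurable_funU => //; first exact: measurableC.
split; last exact: measurable_fun_set1.
apply: measurable_realfun.open_continuous_measurable_fun.
  by rewrite openC; apply: compact_closed; [exact: Rhausdorff|exact: compact_set1].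
by move=> x; rewrite inE /= => /eqP x_neq0; exact: inv_continuous.
Qed.

Lemma measurable_abs_hermite_div d :
  measurable_fun [set: R] (fun t => `|hermite d t| / t).
Proof.
apply: measurable_realfun.measurable_funM; last exact: inv_measurable.
have -> : (fun t => `|hermite d t|) =
    Num.norm \o horner ((Num.sqrt d`!%:R)^-1 *: probHermite R d).
  by apply/funext => t; rewrite /= hornerZ mulrC.
apply: measurable_realfun.continuous_measurable_fun => t.
by apply: continuous_comp; [exact: continuous_horner | exact: norm_continuous].
Qed.

Lemma abs_hermite_div_le d (t : R) : odd d -> 0 < t -> t ^+ 2 <= 4 * (d%:R + 2^-1) ->
  `|hermite d t| / t <= d%:R `^ 4%:R^-1 * expR (t ^+ 2 / 4).
Proof.
move=> d_odd t_gt0 t_small.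
have damped := @damped_horner_le R _ _ (probHermite_ODE R d)
  (horner_probHermite_odd0 R d d_odd) t (ltW t_gt0) t_small.
have deriv0 := deriv_probHermite_odd0_bound R d d_odd.
set S := Num.sqrt d`!%:R in deriv0 *.
have S_gt0 : 0 < S by rewrite sqrtr_gt0 ltr0n fact_gt0.
rewrite /hermite -/S normrM normfV (ger0_norm (ltW S_gt0)).
rewrite !ler_pdivrMr //.
move: damped; rewrite expRN ler_pdivrMr ?expR_gt0 // => /le_trans; apply.
set e := expR _; have -> : d%:R `^ 4%:R^-1 * e * t * S = d%:R `^ 4%:R^-1 * S * t * e.
  by ring.
by rewrite ler_pM2r ?expR_gt0 // ler_pM2r.
Qed.

Lemma abs_hermite_div_itv_bound d (tau t : R) : odd d -> tau ^+ 2 <= d%:R ->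
  0 <= t <= tau -> 0 <= `|hermite d t| / t <= d%:R `^ 4%:R^-1 * expR (tau ^+ 2 / 4).
Proof.
move=> d_odd tau2 /andP[t_ge0 t_le]; rewrite divr_ge0 //=.
have [->|t_neq0] := eqVneq t 0.
  by rewrite invr0 mulr0 mulr_ge0 ?powR_ge0 ?expR_ge0.
have t_gt0 : 0 < t by rewrite lt_neqAle eq_sym t_neq0.
have t2 : t ^+ 2 <= tau ^+ 2 by rewrite lerXn2r ?nnegrE // (le_trans t_ge0).
apply: le_trans (abs_hermite_div_le d t d_odd t_gt0 _) _.
  by have := ler0n R d; lra.
by rewrite ler_wpM2l ?powR_ge0 // ler_expR ler_pM2r.
Qed.

Lemma le_integral_itvcc_bound (a b M : R) (f : R -> R) : a <= b ->
  measurable_fun `[a, b] f -> (forall t, a <= t <= b -> 0 <= f t <= M) ->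
  (\int[lebesgue_measure]_(t in `[a, b]) (f t)%:E <= (M * (b - a))%:E)%E.
Proof.
move=> ab mf f_bound.
have /andP[fa_ge0 fa_le] : 0 <= f a <= M by apply: f_bound; rewrite lexx ab.
have M_ge0 := le_trans fa_ge0 fa_le.
apply: (le_trans (ge0_le_integral _ _ (f2 := fun=> M%:E) _ _ (measurable_cst _) _))
  => //.
- by move=> t; rewrite /= in_itv /= => /f_bound /andP[].
- exact/measurable_realfun.measurable_EFinP.
- by move=> t; rewrite /= in_itv /= => /f_bound /andP[_]; rewrite lee_fin.
rewrite integral_cst //= lebesgue_measure_itv /= lte_fin.
case: ifP => _; first by rewrite -EFinD -EFinM.
by rewrite mule0 lee_fin mulr_ge0 // subr_ge0.
Qed.

End HermiteIntegral.

Local Open Scope classical_set_scope.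

Theorem lemmaA10 (R : realType) :
  exists C : R, forall (d : nat) (tau : R),
    odd d -> 0 <= tau -> tau <= (d%:R) `^ (6%:R^-1) ->
    (\int[@lebesgue_measure R]_(t in `[0%R, tau]%classic) (`|hermite d t| / t)%:E
      <= (C * (d%:R) `^ (4%:R^-1) * tau * expR (tau ^+ 2 / 4%:R))%:E)%E.
Proof.
exists 1 => d tau d_odd tau_ge0 tau_le.
have tau2 : tau ^+ 2 <= d%:R.
  by apply: sqr_le_of_le_powR6 => //; rewrite ler1n odd_gt0.
apply: le_trans (@le_integral_itvcc_bound R 0 tau _ _ tau_ge0 _ _) _.
- exact: measurable_funTS (measurable_abs_hermite_div R d).
- by move=> t; exact: abs_hermite_div_itv_bound.
- by rewrite lee_fin subr0 mul1r mulrAC.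
Qed.
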